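(* Let $G$ be a connected graph whose girth $g$ is finite and even. Then there is an $N \in \mathbb{N}$ such that $P_{DP}(G,m) < P(G,m)$ for every integer $m \geq N$.
   Context: All graphs are finite and simple. $P(G,m)$ denotes the chromatic polynomial of $G$, i.e. the number of proper colorings of $G$ with colors from $[m]=\{1,\dots,m\}$. A cover of a graph $G$ is a pair $\mathcal{H}=(L,H)$ where $H$ is a graph and $L:V(G)\to\mathcal{P}(V(H))$ satisfies: (1) the sets $L(u)$, $u\in V(G)$, partition $V(H)$; (2) for every $u\in V(G)$, $H[L(u)]$ is complete; (3) if $E_H(L(u),L(v))\neq\emptyset$ then $u=v$ or $uv\in E(G)$; (4) if $uv\in E(G)$ then $E_H(L(u),L(v))$ is a matching (possibly empty). Here $E_H(S,U)$ is the set of edges of $H$ with one endpoint in $S$ and the other in $U$. The cover is $m$-fold if $|L(u)|=m$ for all $u$. An $\mathcal{H}$-coloring of $G$ is an independent set $I$ in $H$ with $|I|=|V(G)|$ (equivalently $|I\cap L(u)|=1$ for each $u$). $P_{DP}(G,\mathcal{H})$ is the number of $\mathcal{H}$-colorings of $G$, and the DP color function $P_{DP}(G,m)$ is the minimum of $P_{DP}(G,\mathcal{H})$ over all $m$-fold covers $\mathcal{H}$ of $G$. *)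

From mathcomp Require Import all_boot.
Set Implicit Arguments. Unset Strict Implicit. Unset Printing Implicit Defensive.

(* A finite simple graph G is a pair (T, e) with T : finType the vertex set and
   e : rel T a symmetric irreflexive adjacency relation (hypotheses of the theorem). *)

Section Graphs.
Variable T : finType.
Variable e : rel T.

Definition proper_coloring (m : nat) (f : {ffun T -> 'I_m}) : bool :=
  [forall x, forall y, e x y ==> (f x != f y)].

Definition chrom_poly (m : nat) : nat :=
  #|[set f : {ffun T -> 'I_m} | proper_coloring f]|.

Definition graph_cycle (s : seq T) : bool :=
  [&& 3 <= size s, uniq s & cycle e s].

Definition is_girth (g : nat) : Prop :=
  (exists s, graph_cycle s /\ size s = g) /\
  (forall s, graph_cycle s -> g <= size s).

Definition is_cover (U : finType) (h : rel U) (L : T -> {set U}) : bool :=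
  [&&
      [forall x, ~~ h x x], [forall x, forall y, h x y == h y x],
      [forall x, #|[set u | x \in L u]| == 1],
      [forall u, forall x, forall y,
          [&& x \in L u, y \in L u & x != y] ==> h x y],
      [forall u, forall v, forall x, forall y,
          [&& x \in L u, y \in L v & h x y] ==> ((u == v) || e u v)] &
      [forall u, forall v, e u v ==>
          [forall x, (x \in L u) ==> (#|[set y in L v | h x y]| <= 1)]
       && [forall y, (y \in L v) ==> (#|[set x in L u | h x y]| <= 1)]]].

Definition is_mfold_cover (m : nat) (U : finType) (h : rel U) (L : T -> {set U}) : bool :=
  is_cover h L && [forall u, #|L u| == m].

(* Number of H-colourings: independent sets I of H with |I| = |V(G)|. *)
Definition DP_count (U : finType) (h : rel U) : nat :=
  #|[set I : {set U} | [forall x in I, forall y in I, ~~ h x y] && (#|I| == #|T|)]|.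

(* Every m-fold cover has exactly #|T| * m vertices, so up to
   isomorphism (which preserves the number of H-colourings) every m-fold cover has
   vertex set 'I_(#|T| * m); the minimum ranges over all such covers (a finite
   family).  The neutral element m ^ #|T| is an upper bound of every
   P_DP(G,H) (at most one vertex per L(u) in an independent set) and is attained by
   the cover with no cross edges, so it does not affect the minimum. *)
Definition cover_data (m : nat) : finType :=
  ({ffun 'I_(#|T| * m) * 'I_(#|T| * m) -> bool} * {ffun T -> {set 'I_(#|T| * m)}})%type.

Definition DP_color_fn (m : nat) : nat :=
  \big[minn/m ^ #|T|]_(C : cover_data m
        | is_mfold_cover m (fun x y => C.1 (x, y)) (fun u => C.2 u))
     DP_count (fun x y => C.1 (x, y)).

End Graphs.

From mathcomp Require Import all_boot all_order all_algebra fingroup perm.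
From Stdlib Require Import FunctionalExtensionality.
Set Implicit Arguments. Unset Strict Implicit. Unset Printing Implicit Defensive.

(* Let u :: p0 be a shortest cycle of G (of even length g), closed by the edge
   uv, and let s be the transposition of two colours c0, c1.  Twisting the edge
   uv by s gives an m-fold (permutation) cover of G whose colourings inject into
   the colourings f of G - uv that are proper and satisfy f v <> s (f u); the
   proper colourings of G are those with f v <> f u instead.  So it suffices that
   the difference D of these two counts is positive.

   Expanding properness on G - uv by inclusion-exclusion over edge sets J gives
   D = sum_J (-1)^|J| term J.  A term vanishes unless J joins u to v (swap c0 and
   c1 on the J-component of v); otherwise -term J counts the colourings constant
   along J with f u in {c0, c1}.  By the girth such a J has at least g - 1 edges:
   with exactly g - 1 edges (an odd number) its signed term is nonnegative, and
   with more edges an elimination chain forces g + 1 colours, so the term is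
   O(m^(n-g-1)).  The path p0 contributes about m^(n-g), which wins once m
   exceeds twice the number 2^(n^2) of edge sets. *)

Section Paths.
Variable T : eqType.

Definition path_edges (x : T) (p : seq T) : seq (T * T) := zip (x :: p) p.

Lemma path_edges_snd x p : map snd (path_edges x p) = p.
Proof. by rewrite -/(unzip2 _) unzip2_zip //= leqnSn. Qed.

Lemma size_path_edges x p : size (path_edges x p) = size p.
Proof. by rewrite -(size_map snd) path_edges_snd. Qed.

Lemma mem_path_edges x p y z : (y, z) \in path_edges x p -> y \in x :: p /\ z \in p.
Proof.
elim: p x => [|w p IH] x //= /[1!inE] /orP[/eqP[-> ->]|/IH[yp zp]].
  by split; rewrite ?eqxx ?mem_head.
by split; rewrite ?yp ?inE ?zp orbT.
Qed.

Lemma path_edgesP (r : rel T) x p : path r x p = all (fun q => r q.1 q.2) (path_edges x p).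
Proof. by elim: p x => [|w p IH] x //=; rewrite IH. Qed.

Lemma path_edges_closing x p : uniq (x :: p) -> 1 < size p ->
  (x, last x p) \notin path_edges x p /\ (last x p, x) \notin path_edges x p.
Proof.
move=> /andP[xp up] p2; split; apply/negP; last by case/mem_path_edges=> _ /(negP xp).
case: p xp up p2 => [|y [|z p]] // xp /andP[yp _] _.
rewrite -[path_edges _ _]/((x, y) :: path_edges y (z :: p)) in_cons.
case/orP=> [/eqP[ly]|/mem_path_edges[+ _]]; last exact/negP.
by move: yp; rewrite -{1}ly mem_last.
Qed.

Variable r : rel T.
Hypothesis r_sym : symmetric r.

Lemma shortcut x q a b : path r x q -> a \in x :: q -> b \in x :: q -> a != b -> r a b ->
  (a, b) \notin path_edges x q -> (b, a) \notin path_edges x q ->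
  exists2 q', path r x q' &
    [/\ last x q' = last x q, subseq (x :: q') (x :: q) & size q' < size q].
Proof.
elim: q x a b => [|y q IH] x a b.
  by move=> _; rewrite !inE => /eqP-> /eqP->; rewrite eqxx.
move=> /andP[rxy pyq]; have {}pyq : path r y q := pyq.
wlog bx : a b / b != x => [hw ain bin anb rab zab zba|].
  case: (eqVneq b x) => [bx|bx]; last exact: (hw a b bx).
  have ax : a != x by rewrite -bx.
  by apply: (hw b a ax); rewrite // 1?eq_sym // r_sym.
move=> ain bin anb rab; rewrite /path_edges [zip (x :: _) _]/= !in_cons !negb_or.
move=> /andP[abxy zab] /andP[baxy zba].
have {bin} bq : b \in y :: q by move: bin; rewrite inE (negbTE bx).
case: (eqVneq a x) => [ax|ax]; last first.
  have aq : a \in y :: q by move: ain; rewrite inE (negbTE ax).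
  have [q' pq' [lq' sq' szq']] := IH y a b pyq aq bq anb rab zab zba.
  exists (y :: q'); first by rewrite /= rxy.
  by split=> //; rewrite -(cat1s x) -(cat1s x (y :: q)) cat_subseq.
subst a; have yb : b != y by apply: contraNneq abxy => ->.
have {bq} bq : b \in q by move: bq; rewrite inE (negbTE yb).
case/splitPr: bq pyq => q1 q2 pyq; exists (b :: q2).
  by move: pyq; rewrite /= rab cat_path /= => /and3P[].
split; first by rewrite /= last_cat.
  by rewrite -(cat1s x) -(cat1s x (y :: _)) cat_subseq // -cat_cons suffix_subseq.
by rewrite /= size_cat /= addnS ltnS ltnS leq_addl.
Qed.

End Paths.

Section Chains.
Variable T : finType.
Variable J : {set T * T}.

Definition adj (x y : T) : bool := ((x, y) \in J) || ((y, x) \in J).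

Lemma adj_sym : symmetric adj.
Proof. by move=> x y; rewrite /adj orbC. Qed.

(* For a
   colouring constant along J, the colour of each w is forced by that of x. *)
Fixpoint chain (ws : seq (T * T)) : bool :=
  if ws is (x, w) :: ws' then
    [&& adj x w, x \notin w :: map snd ws', w \notin map snd ws' & chain ws']
  else true.

Lemma chain_uniq ws : chain ws -> uniq (map snd ws).
Proof. by elim: ws => [|[x w] ws IH] //= /and4P[_ _ -> /IH]. Qed.

Lemma chain_adj ws : chain ws -> all (fun p => adj p.1 p.2) ws.
Proof. by elim: ws => [|[x w] ws IH] //= /and4P[-> _ _ /IH]. Qed.

Lemma chain_determines (C : Type) (ws : seq (T * T)) (f f' : T -> C) :
  chain ws -> (forall p, p \in J -> f p.1 = f p.2) ->
  (forall p, p \in J -> f' p.1 = f' p.2) ->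
  (forall x, x \notin map snd ws -> f x = f' x) -> forall x, f x = f' x.
Proof.
move=> + cf cf'; elim: ws => [|[x w] ws IH] /=; first by move=> _ H y; apply: H.
case/and4P=> axw xn wn cws H; apply: IH => // y yn.
have along_xw h : (forall p, p \in J -> h p.1 = h p.2) -> h x = h w :> C.
  by move=> ch; case/orP: axw => /ch //= ->.
case: (eqVneq y w) => [->|ynw]; last by apply: H; rewrite inE negb_or ynw.
by rewrite -(along_xw f cf) -(along_xw f' cf'); apply: H.
Qed.

Lemma path_chain x p ws : path adj x p -> uniq (x :: p) -> chain ws ->
  all (fun z => z \notin map snd ws) (x :: p) -> chain (path_edges x p ++ ws).
Proof.
elim: p x => [|w p IH] x //= /andP[axw pw] /andP[xn wu] cws /andP[xws /andP[wws pws]].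
have snd_edges : map snd (path_edges w p ++ ws) = p ++ map snd ws.
  by rewrite map_cat path_edges_snd.
move: xn wu; rewrite /= inE negb_or => /andP[xw xp] /andP[wp pu].
rewrite axw snd_edges !inE !mem_cat !negb_or xw xp xws wp wws /=.
by apply: IH => //=; rewrite ?wp ?pu ?wws.
Qed.

End Chains.

Section Orientation.
Variable T : finType.
Variable E : {set T * T}.
Hypothesis E_antisym : forall x y, (x, y) \in E -> (y, x) \notin E.

Definition orient (p : T * T) : T * T := if p \in E then p else (p.2, p.1).

Definition oriented (ws : seq (T * T)) : {set T * T} := orient @: [set:: ws].

Lemma oriented_card ws : #|oriented ws| <= size ws.
Proof. by rewrite (leq_trans (leq_imset_card _ _)) // cardsE card_size. Qed.

Lemma oriented_sub (J : {set T * T}) ws : J \subset E ->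
  all (fun p => adj J p.1 p.2) ws -> oriented ws \subset J.
Proof.
move=> JE /allP adjw; apply/subsetP => q /imsetP[[x w]].
rewrite inE => /adjw /orP[xwJ|wxJ] ->; first by rewrite /orient (subsetP JE _ xwJ).
by rewrite /orient (negbTE (E_antisym (subsetP JE _ wxJ))).
Qed.

(* The edges of a chain stay distinct after orientation: each has its
   eliminated vertex outside all later edges. *)
Lemma card_oriented_chain (J : {set T * T}) ws : chain J ws -> #|oriented ws| = size ws.
Proof.
elim: ws => [|[x w] ws IH] /=; first by rewrite /oriented set_nil imset0 cards0.
case/and4P=> _ xn wn /IH card_ws.
have coords q : q \in oriented ws -> (q.1 \in map snd ws) || (q.2 \in map snd ws).
  case/imsetP=> [[y z]]; rewrite inE => yzw ->.
  have zw : z \in map snd ws by apply/mapP; exists (y, z).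
  by rewrite /orient; case: ifP => _ /=; rewrite zw ?orbT.
have new : orient (x, w) \notin oriented ws.
  apply/negP=> /coords; move: xn; rewrite inE negb_or => /andP[_ xn].
  by rewrite /orient; case: ifP => _ /=; rewrite (negbTE xn) (negbTE wn).
by rewrite /oriented /= set_cons imsetU1 cardsU1 new card_ws.
Qed.

Lemma chain_card (J : {set T * T}) ws : J \subset E -> chain J ws -> size ws <= #|J|.
Proof.
move=> JE cws; rewrite -(card_oriented_chain cws).
exact/subset_leq_card/oriented_sub/chain_adj.
Qed.

End Orientation.

Section Girth.
Variable T : finType.
Variable e : rel T.
Hypothesis e_sym : symmetric e.
Hypothesis e_irr : irreflexive e.
Variable g : nat.
Hypothesis hg : is_girth e g.
Variables u v : T.
Hypothesis euv : e u v.

Definition Erest : {set T * T} :=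
  [set p | [&& e p.1 p.2, enum_rank p.1 < enum_rank p.2, p != (u, v) & p != (v, u)]].

Lemma Erest_antisym x y : (x, y) \in Erest -> (y, x) \notin Erest.
Proof.
rewrite !inE /= => /and4P[_ xy _ _]; apply/negP => /and4P[_ yx _ _].
by move: (ltn_trans xy yx); rewrite ltnn.
Qed.

Lemma adj_edge (J : {set T * T}) x y : J \subset Erest -> adj J x y -> e x y.
Proof.
move=> JE; case/orP=> /(subsetP JE); rewrite inE /= => /and4P[] //.
by rewrite e_sym.
Qed.

Lemma not_adj_uv (J : {set T * T}) : J \subset Erest -> ~~ adj J u v.
Proof.
move=> JE; apply/negP; case/orP=> /(subsetP JE); rewrite inE /= => /and4P[_ _];
by rewrite eqxx // andbF.
Qed.

Lemma orient_Erest x y : e x y -> (x, y) != (u, v) -> (x, y) != (v, u) ->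
  orient Erest (x, y) \in Erest.
Proof.
move=> exy xyuv xyvu; rewrite /orient; case: ifP => // xyE; rewrite inE /= e_sym exy.
have yx : y != x by apply: contraTneq exy => ->; rewrite e_irr.
move: xyE; rewrite inE /= exy xyuv xyvu !andbT => /negbT; rewrite -leqNgt leq_eqVlt.
case/orP=> [/eqP/ord_inj/enum_rank_inj yx'|->]; first by rewrite yx' eqxx in yx.
by rewrite /=; apply/andP; split; [move: xyvu | move: xyuv]; apply: contra => /eqP[-> ->].
Qed.

(* A path from u to v avoiding the edge uv closes a cycle with it, so it has at
   least g - 1 edges. *)
Lemma uv_path_size (J : {set T * T}) p : J \subset Erest -> path (adj J) u p ->
  last u p = v -> uniq (u :: p) -> g <= (size p).+1.
Proof.
move=> JE pp lp up; have [_ minimal] := hg; apply: (minimal (u :: p)).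
rewrite /graph_cycle up /= rcons_path (sub_path (fun x y => adj_edge JE) pp).
rewrite lp e_sym euv andbT /=.
case: p pp lp up => [|w [|w' p]] //= => [_ uv|/andP[auw _] wv _].
  by move: euv; rewrite uv e_irr.
by move: (not_adj_uv JE); rewrite -wv auw.
Qed.

Lemma connect_uniq_path (J : {set T * T}) : connect (adj J) u v ->
  exists p, [/\ path (adj J) u p, last u p = v & uniq (u :: p)].
Proof. by case/connectP=> p pp ->; case: (shortenP pp) => p' pp' up' _; exists p'. Qed.

Lemma connect_card (J : {set T * T}) : J \subset Erest -> connect (adj J) u v ->
  g <= #|J|.+1.
Proof.
move=> JE /connect_uniq_path[p [pp lp up]].
apply: leq_trans (uv_path_size JE pp lp up) _; rewrite ltnS -(size_path_edges u p).
apply: (chain_card Erest_antisym JE); rewrite -[path_edges u p]cats0.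
by apply: path_chain => //; apply/allP.
Qed.

(* A u-v path with fewer than g edges has no chord in J: every J-edge between
   two of its vertices is one of its edges (otherwise it could be shortened). *)
Lemma uv_path_no_chord (J : {set T * T}) p a b : J \subset Erest ->
  path (adj J) u p -> last u p = v -> uniq (u :: p) -> size p < g ->
  (a, b) \in J -> a \in u :: p -> b \in u :: p -> (a, b) \in oriented Erest (path_edges u p).
Proof.
move=> JE pp lp up small abJ ap bp; apply: contraT => abW.
have abE := subsetP JE _ abJ; have ab_adj : adj J a b by rewrite /adj abJ.
have anb : a != b by apply: contraTneq (adj_edge JE ab_adj) => ->; rewrite e_irr.
have not_edge q : q \in path_edges u p -> orient Erest q <> (a, b).
  by move=> qp oq; move: abW; rewrite -oq; case/imsetP; exists q; rewrite ?inE.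
have zab : (a, b) \notin path_edges u p.
  by apply/negP => /not_edge; apply; rewrite /orient abE.
have zba : (b, a) \notin path_edges u p.
  by apply/negP => /not_edge; apply; rewrite /orient (negbTE (Erest_antisym abE)).
have [q' pq' [lq' sq' szq']] := shortcut (@adj_sym _ J) pp ap bp anb ab_adj zab zba.
have := uv_path_size JE pq' (etrans lq' lp) (subseq_uniq sq' up).
by rewrite leqNgt (leq_ltn_trans szq' small).
Qed.

(* A J joining u to v with at least g edges has an elimination chain of length g
   avoiding u: take a u-v path; if it has g - 1 edges, an extra edge of J is not
   a chord of it, so it reaches a new vertex and extends the chain. *)
Lemma long_chain (J : {set T * T}) : J \subset Erest -> connect (adj J) u v -> g <= #|J| ->
  exists2 W, chain J W & u \notin map snd W /\ g <= size W.
Proof.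
move=> JE /connect_uniq_path[p [pp lp up]] gJ.
have long := uv_path_size JE pp lp up.
have unp : u \notin p by case/andP: up.
have chainW ws : chain J ws -> all (fun z => z \notin map snd ws) (u :: p) ->
    chain J (path_edges u p ++ ws) by apply: path_chain.
case: (leqP g (size p)) => [big|small].
  exists (path_edges u p ++ [::]); first by apply: chainW => //; apply/allP.
  by rewrite cats0 path_edges_snd size_path_edges.
have extend z w : adj J z w -> z != w -> w \notin u :: p ->
    exists2 W, chain J W & u \notin map snd W /\ g <= size W.
  move=> azw zw wp; exists (path_edges u p ++ [:: (z, w)]).
    apply: chainW; first by rewrite /= azw !inE zw.
    by apply/allP => y yp; rewrite inE /=; apply: contraNneq wp => <-.
  rewrite map_cat path_edges_snd mem_cat negb_or unp inE /= size_cat size_path_edges addn1.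
  by split=> //; apply: contraNneq wp => <-; rewrite mem_head.
have : ~~ (J \subset oriented Erest (path_edges u p)).
  apply/negP => /subset_leq_card; apply/negP; rewrite -ltnNge.
  apply: leq_ltn_trans (oriented_card _ _) _; rewrite size_path_edges.
  exact: leq_trans small gJ.
case/subsetPn => [[a b] abJ abW]; have ab_adj : adj J a b by rewrite /adj abJ.
have anb : a != b by apply: contraTneq (adj_edge JE ab_adj) => ->; rewrite e_irr.
case: (boolP (b \in u :: p)) => bp; last exact: extend ab_adj anb bp.
case: (boolP (a \in u :: p)) => ap; last by apply: (extend b a); rewrite 1?adj_sym 1?eq_sym.
by rewrite (uv_path_no_chord JE pp lp up small abJ ap bp) in abW.
Qed.

End Girth.

Section RootedCount.
Variable T : finType.
Variable m : nat.
Variable c : 'I_m.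
Variable u : T.

Definition constant_on (J : {set T * T}) (f : {ffun T -> 'I_m}) : bool :=
  [forall p in J, f p.1 == f p.2].

Definition rooted_count (J : {set T * T}) : nat :=
  #|[set f : {ffun T -> 'I_m} | constant_on J f && (f u == c)]|.

Lemma card_fixed_on (K : seq T) : uniq K ->
  #|[set f : {ffun T -> 'I_m} | [forall x in K, f x == c]]| * m ^ size K = m ^ #|T|.
Proof.
move=> uK; have -> : [set f : {ffun T -> 'I_m} | [forall x in K, f x == c]] =
                     [set f in pffun_on c [predC K] predT].
  apply/setP => f; rewrite !inE; apply/forall_inP/pffun_onP => [fK|[sD _] x xK].
    split=> //; apply/subsetP => x; rewrite !inE; apply: contra => /fK/eqP.
    by move=> ->; rewrite eqxx.
  by apply/negPn/negP => /(subsetP sD); rewrite !inE xK.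
rewrite cardsE card_pffun_on card_ord -expnD; congr (m ^ _).
by rewrite -(card_uniqP uK) addnC cardC.
Qed.

(* A chain avoiding u forces the colours of size W + 1 vertices. *)
Lemma rooted_count_upper (J : {set T * T}) W : chain J W -> u \notin map snd W ->
  rooted_count J * m ^ (size W).+1 <= m ^ #|T|.
Proof.
move=> cW uW; set K := u :: map snd W.
have uK : uniq K by rewrite /K /= uW (chain_uniq cW).
have szK : size K = (size W).+1 by rewrite /= size_map.
set A := [set f : {ffun T -> 'I_m} | constant_on J f && (f u == c)].
pose reset (f : {ffun T -> 'I_m}) := [ffun x => if x \in K then c else f x].
have reset_inj : {in A &, injective reset}.
  move=> f f'; rewrite !inE => /andP[/forall_inP cf /eqP fu] /andP[/forall_inP cf' /eqP fu'].
  move=> eqf.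
  apply/ffunP; apply: (chain_determines cW) => [p /cf/eqP|p /cf'/eqP|x xW] //.
  have := congr1 (fun h : {ffun T -> 'I_m} => h x) eqf; rewrite !ffunE.
  case: (eqVneq x u) => [->|xu]; first by rewrite fu fu'.
  by rewrite /K inE (negbTE xu) (negbTE xW).
have reset_fixed :
    reset @: A \subset [set f : {ffun T -> 'I_m} | [forall x in K, f x == c]].
  apply/subsetP => h /imsetP[f _ ->]; rewrite inE.
  by apply/forall_inP => x xK; rewrite ffunE xK.
rewrite /rooted_count -/A -szK -(card_in_imset reset_inj) -(card_fixed_on uK) leq_mul2r.
by rewrite (subset_leq_card reset_fixed) orbT.
Qed.

(* Conversely, if every edge of J lies inside K, fixing K to c is compatible. *)
Lemma rooted_count_lower (J : {set T * T}) (K : seq T) : uniq K -> u \in K ->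
  (forall p, p \in J -> (p.1 \in K) && (p.2 \in K)) ->
  m ^ #|T| <= rooted_count J * m ^ size K.
Proof.
move=> uK uinK JK; rewrite -(card_fixed_on uK) leq_mul2r; apply/orP; right.
apply: subset_leq_card; apply/subsetP => f; rewrite !inE => /forall_inP fK.
rewrite (fK _ uinK) andbT; apply/forall_inP => p /JK /andP[p1K p2K].
by rewrite (eqP (fK _ p1K)) (eqP (fK _ p2K)).
Qed.

End RootedCount.

Section InclusionExclusion.
Import GRing.Theory Num.Theory.
Local Open Scope ring_scope.

Lemma card_sum (I : finType) (P : pred I) : (#|[set i | P i]|%:R : int) = \sum_i (P i)%:R.
Proof.
rewrite -sum1_card natr_sum big_mkcond /=; apply: eq_bigr => i _.
by rewrite inE; case: (P i).
Qed.

Lemma prod_bool (I : finType) (A : pred I) (b : I -> bool) :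
  \prod_(i in A) ((b i)%:R : int) = ([forall i in A, b i])%:R.
Proof.
case: (boolP [forall i in A, b i]) => [/forall_inP h|/forall_inPn [i iA nb]].
  by apply: big1 => i /h ->.
by rewrite (bigD1 i) //= (negbTE nb) mul0r.
Qed.

Variable T : finType.
Variable e : rel T.
Variables u v : T.
Variable m : nat.
Variables c0 c1 : 'I_m.
Hypothesis c01 : c0 != c1.

Local Notation Er := (Erest e u v).
Local Notation s := (tperm c0 c1).

Definition off_edge_proper (f : {ffun T -> 'I_m}) : bool := [forall p in Er, f p.1 != f p.2].

Definition monochromatic (J : {set T * T}) (f : {ffun T -> 'I_m}) : bool :=
  [forall p in J, (p \in Er) && (f p.1 == f p.2)].

(* The weight of a colouring in the difference of the two counts, and its
   contribution from the colourings constant along J. *)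
Definition weight (f : {ffun T -> 'I_m}) : int := (f v == s (f u))%:R - (f v == f u)%:R.

Definition term (J : {set T * T}) : int := \sum_f (monochromatic J f)%:R * weight f.

Lemma off_edge_proper_expand (f : {ffun T -> 'I_m}) :
  ((off_edge_proper f)%:R : int) = \sum_(J : {set T * T}) (-1) ^+ #|J| * (monochromatic J f)%:R.
Proof.
have -> : ((off_edge_proper f)%:R : int) =
    \prod_(p : T * T) (- ((p \in Er) && (f p.1 == f p.2))%:R + 1).
  transitivity (\prod_(p : T * T) ((~~ ((p \in Er) && (f p.1 == f p.2)))%:R : int)).
    rewrite prod_bool /off_edge_proper; congr (_%:R); congr (nat_of_bool _).
    by apply/forall_inP/forallP => h p; have := h p; case: (p \in Er) => //= ->.
  by apply: eq_bigr => p _; rewrite addrC; case: (_ && _).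
rewrite (bigA_distr 1 +%R); apply: eq_bigr => J _.
by rewrite -big_mkcond /= prodrN prod_bool.
Qed.

Lemma difference_expansion :
  (#|[set f | off_edge_proper f && (f v != f u)]|%:R -
   #|[set f | off_edge_proper f && (f v != s (f u))]|%:R : int)
  = \sum_(J : {set T * T}) (-1) ^+ #|J| * term J.
Proof.
rewrite !card_sum -sumrB.
transitivity (\sum_f (off_edge_proper f)%:R * weight f).
  apply: eq_bigr => f _; rewrite /weight.
  case: (off_edge_proper f); case: (f v == f u); case: (f v == s (f u));
  by rewrite /= ?mul1r ?mul0r.
under eq_bigr => f _ do rewrite off_edge_proper_expand mulr_suml.
rewrite exchange_big /=; apply: eq_bigr => J _.
by rewrite /term mulr_sumr; apply: eq_bigr => f _; rewrite mulrA.
Qed.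

Lemma term_not_sub (J : {set T * T}) : ~~ (J \subset Er) -> term J = 0.
Proof.
case/subsetPn => p pJ pE; apply: big1 => f _.
suff -> : monochromatic J f = false by rewrite mul0r.
by apply/negP => /forall_inP /(_ p pJ); rewrite (negbTE pE).
Qed.

Lemma monochromatic_constant (J : {set T * T}) f :
  J \subset Er -> monochromatic J f = constant_on J f.
Proof.
move=> JE; apply/forall_inP/forall_inP => h p pJ; first by case/andP: (h p pJ).
by rewrite (subsetP JE _ pJ) (h p pJ).
Qed.

Lemma constant_connect (J : {set T * T}) (f : {ffun T -> 'I_m}) x y :
  constant_on J f -> connect (adj J) x y -> f x = f y.
Proof.
move=> /forall_inP cf /connectP [p pp ->]; elim: p x pp => [|z p IH] x //= /andP[axz pz].
by rewrite -(IH z pz); case/orP: axz => /cf /eqP.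
Qed.

(* If J joins u and v, the weight of a colouring constant along J is
   -[f u = c0] - [f u = c1]. *)
Lemma term_connected (J : {set T * T}) : J \subset Er -> connect (adj J) u v ->
  term J = - ((rooted_count c0 u J)%:R + (rooted_count c1 u J)%:R).
Proof.
move=> JE cuv; rewrite /rooted_count !card_sum -big_split /= -sumrN.
apply: eq_bigr => f _; rewrite monochromatic_constant //.
case: (boolP (constant_on J f)) => cf /=; last by rewrite mul0r addr0 oppr0.
rewrite mul1r /weight -(constant_connect cf cuv) eqxx.
case: tpermP => [->|->|/eqP/negbTE-> /eqP/negbTE->];
  by rewrite ?eqxx ?(eq_sym c1 c0) ?(negbTE c01) /= ?sub0r ?addr0 ?add0r ?subrr ?oppr0.
Qed.

(* Otherwise, swapping c0 and c1 on the J-component of v is a weight-reversing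
   involution on the colourings constant along J. *)
Lemma term_disconnected (J : {set T * T}) : J \subset Er -> ~~ connect (adj J) u v ->
  term J = 0.
Proof.
move=> JE ncuv; pose K := [set x | connect (adj J) v x].
pose rho (f : {ffun T -> 'I_m}) := [ffun x => if x \in K then s (f x) else f x].
have rhoK : involutive rho.
  by move=> f; apply/ffunP => x; rewrite !ffunE; case: (x \in K); rewrite ?tpermK.
have uK : u \notin K.
  by rewrite inE; apply: contra ncuv; rewrite (sym_connect_sym (@adj_sym _ J)).
have vK : v \in K by rewrite inE connect0.
have s_eq a b : (s a == b) = (a == s b) by apply: can2_eq; apply: tpermK.
have mono_rho f : monochromatic J (rho f) = monochromatic J f.
  rewrite !monochromatic_constant //; apply: eq_forallb_in => p pJ.
  have ap : adj J p.1 p.2 by rewrite /adj; case: p pJ => a b /= ->.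
  have hK : (p.1 \in K) = (p.2 \in K).
    rewrite !inE; apply/idP/idP => h; first exact: connect_trans h (connect1 ap).
    by apply: connect_trans h (connect1 _); rewrite adj_sym.
  by rewrite !ffunE hK; case: (p.2 \in K); rewrite // s_eq tpermK.
have weight_rho f : weight (rho f) = - weight f.
  by rewrite /weight !ffunE (negbTE uK) vK s_eq tpermK (s_eq (f v)) opprB.
have : term J = - term J.
  rewrite {1}/term (reindex_inj (inv_inj rhoK)) /term -sumrN; apply: eq_bigr => f _.
  by rewrite mono_rho weight_rho mulrN.
by move/eqP; rewrite -addr_eq0 -mulr2n mulrn_eq0 /= => /eqP.
Qed.

End InclusionExclusion.

Section Estimate.
Import Order.TTheory GRing.Theory Num.Theory.
Variable T : finType.
Variable e : rel T.
Hypothesis e_sym : symmetric e.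
Hypothesis e_irr : irreflexive e.
Variable g : nat.
Hypothesis hg : is_girth e g.
Hypothesis g_even : ~~ odd g.
Variables (u v : T) (p0 : seq T).
Hypothesis cycle_p0 : graph_cycle e (u :: p0).
Hypothesis size_p0 : size (u :: p0) = g.
Hypothesis last_p0 : last u p0 = v.
Variable m : nat.
Variables c0 c1 : 'I_m.
Hypothesis c01 : c0 != c1.

Local Notation Er := (Erest e u v).

Lemma closing_edge : e u v.
Proof. by case/and3P: cycle_p0 => _ _; rewrite /= rcons_path last_p0 e_sym => /andP[]. Qed.

Lemma cycle_uniq : uniq (u :: p0).
Proof. by case/and3P: cycle_p0. Qed.

Lemma cycle_path : path e u p0.
Proof. by case/and3P: cycle_p0 => _ _; rewrite /= rcons_path => /andP[]. Qed.

(* Since g is even and at least 3, the path p0 has at least 3 edges. *)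
Lemma size_p0_ge3 : 3 <= size p0.
Proof.
move: cycle_p0 g_even; rewrite /graph_cycle -size_p0 => /and3P[g3 _ _].
by move: g3; rewrite /= ltnS leq_eqVlt => /orP[/eqP <-|].
Qed.

Definition cycle_edges : {set T * T} := oriented Er (path_edges u p0).

Lemma cycle_edges_sub : cycle_edges \subset Er.
Proof.
apply/subsetP => q /imsetP[[x w]]; rewrite inE => xw ->.
have exw : e x w by move: cycle_path; rewrite path_edgesP => /allP/(_ _ xw).
have [uv vu] := path_edges_closing cycle_uniq (ltnW size_p0_ge3).
rewrite last_p0 in uv vu; apply: orient_Erest => //.
  by apply: contraNneq uv => <-.
by apply: contraNneq vu => <-.
Qed.

Lemma cycle_edges_path : path (adj cycle_edges) u p0.
Proof.
rewrite path_edgesP; apply/allP => [[x w] xw] /=.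
have : orient Er (x, w) \in cycle_edges by apply/imsetP; exists (x, w); rewrite ?inE.
by rewrite /adj /orient; case: ifP => _ ->; rewrite ?orbT.
Qed.

Lemma cycle_edges_connect : connect (adj cycle_edges) u v.
Proof. by apply/connectP; exists p0; rewrite ?cycle_edges_path. Qed.

Lemma card_cycle_edges : #|cycle_edges| = g.-1.
Proof.
apply/eqP; rewrite eqn_leq -{1}size_p0 (leq_trans (oriented_card _ _)) ?size_path_edges //=.
have := connect_card e_sym e_irr hg closing_edge cycle_edges_sub cycle_edges_connect.
by case: (g) => [|g'] //; rewrite ltnS.
Qed.

Lemma cycle_edges_inside q : q \in cycle_edges -> (q.1 \in u :: p0) && (q.2 \in u :: p0).
Proof.
case/imsetP=> [[x w]]; rewrite inE => /mem_path_edges[xp wp] ->.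
have wp' : w \in u :: p0 by rewrite inE wp orbT.
by rewrite /orient; case: ifP => _ /=; rewrite xp wp'.
Qed.

Local Open Scope ring_scope.

Lemma m_gt0 : (0 < m)%N.
Proof. by case: c0 => k /(leq_ltn_trans (leq0n k)). Qed.

(* A J joining u and v with at least g edges forces g + 1 colours. *)
Lemma rooted_pair_bound (J : {set T * T}) : J \subset Er -> connect (adj J) u v ->
  (g <= #|J|)%N ->
  ((rooted_count c0 u J + rooted_count c1 u J) * m ^ g.+1 <= 2 * m ^ #|T|)%N.
Proof.
move=> JE cJ gJ; have [W cW [uW gW]] := long_chain e_sym e_irr hg closing_edge JE cJ gJ.
have bound (c : 'I_m) : (rooted_count c u J * m ^ g.+1 <= m ^ #|T|)%N.
  apply: leq_trans _ (rooted_count_upper c cW uW).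
  by rewrite leq_mul2l leq_pexp2l ?m_gt0 ?orbT.
by rewrite mulnDl mul2n -addnn leq_add.
Qed.

Lemma opp_le_sign (k : nat) (X : int) : 0 <= X -> - X <= (-1) ^+ k * - X.
Proof.
move=> X0; rewrite -signr_odd; case: (odd k); rewrite ?expr0 ?mul1r // expr1 mulN1r opprK.
by rewrite (le_trans _ X0) // oppr_le0.
Qed.

(* Every signed term, scaled by m ^ (g + 1), is at least -2 m ^ |T|: it vanishes
   unless J joins u and v, is nonnegative if J has g - 1 (an odd number of) edges,
   and is small otherwise. *)
Lemma term_lower_bound (J : {set T * T}) :
  - ((2 * m ^ #|T|)%N%:R : int) <= ((-1) ^+ #|J| * term e u v c0 c1 J) * (m ^ g.+1)%N%:R.
Proof.
case: (boolP (J \subset Er)) => JE; last by rewrite term_not_sub // mulr0 mul0r oppr_le0.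
case: (boolP (connect (adj J) u v)) => cJ; last first.
  by rewrite term_disconnected // mulr0 mul0r oppr_le0.
rewrite term_connected // -natrD; case: (leqP g #|J|) => gJ.
  apply: le_trans (ler_wpM2r (ler0n _ _) (opp_le_sign #|J| (ler0n _ _))).
  by rewrite mulNr -natrM lerN2 ler_nat rooted_pair_bound.
have odd_J : odd #|J|.
  have := connect_card e_sym e_irr hg closing_edge JE cJ; rewrite leq_eqVlt ltnS leqNgt gJ orbF.
  by move/eqP=> gJ'; move: g_even; rewrite gJ' /= negbK.
rewrite -signr_odd odd_J expr1 mulN1r opprK (le_trans _ (_ : 0 <= _)) ?oppr_le0 //.
by rewrite -natrM ler0n.
Qed.

Lemma term_cycle_bound : ((m ^ #|T| * m)%N%:R : int) <=
  ((-1) ^+ #|cycle_edges| * term e u v c0 c1 cycle_edges) * (m ^ g.+1)%N%:R.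
Proof.
rewrite term_connected ?cycle_edges_sub ?cycle_edges_connect // card_cycle_edges.
have odd_g1 : odd g.-1 by move: g_even; rewrite -size_p0 /= negbK.
rewrite -signr_odd odd_g1 expr1 mulN1r opprK -natrD -natrM ler_nat.
have lower := rooted_count_lower c0 cycle_uniq (mem_head u p0) cycle_edges_inside.
rewrite size_p0 in lower; rewrite expnS; apply: (leq_trans (leq_mul lower (leqnn m))).
by rewrite -mulnA [(m ^ g * m)%N]mulnC leq_mul2r leq_addr orbT.
Qed.

(* The main term dominates once m exceeds twice the number of edge sets. *)
Lemma difference_pos : (2 ^ (#|T| * #|T|) * 2 < m)%N ->
  (#|[set f : {ffun T -> 'I_m} | off_edge_proper e u v f && (f v != tperm c0 c1 (f u))]| <
   #|[set f : {ffun T -> 'I_m} | off_edge_proper e u v f && (f v != f u)]|)%N.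
Proof.
move=> hm; rewrite -(ltr_nat int) -subr_gt0 difference_expansion.
rewrite -(pmulr_lgt0 _ (_ : (0 : int) < (m ^ g.+1)%N%:R)); last by rewrite ltr0n expn_gt0 m_gt0.
rewrite mulr_suml (bigD1 cycle_edges) //=.
set k := #|[pred J : {set T * T} | J != cycle_edges]|.
have hk : (k <= 2 ^ (#|T| * #|T|))%N.
  rewrite -card_prod -cardsT -(card_powerset [set: T * T]).
  by apply: subset_leq_card; apply/subsetP => J _; rewrite powersetE subsetT.
have rest : - (((2 * m ^ #|T|) * k)%N%:R : int) <=
    \sum_(J | J != cycle_edges) ((-1) ^+ #|J| * term e u v c0 c1 J) * (m ^ g.+1)%N%:R.
  apply: le_trans (ler_sum _ (fun J _ => term_lower_bound J)).
  by rewrite sumr_const mulNrn -mulrnA.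
apply: (lt_le_trans _ (lerD term_cycle_bound rest)).
rewrite subr_gt0 ltr_nat [(2 * m ^ #|T|)%N]mulnC -mulnA ltn_mul2l expn_gt0 m_gt0 /=.
by apply: leq_ltn_trans hm; rewrite mulnC leq_mul2r hk orbT.
Qed.

End Estimate.

Section Twisted.
Variable T : finType.
Variable e : rel T.
Variable m : nat.

Definition twisted_coloring (sigma : T -> T -> {perm 'I_m}) (f : {ffun T -> 'I_m}) : bool :=
  [forall x, forall y, e x y ==> (f y != sigma x y (f x))].

Lemma proper_twisted (f : {ffun T -> 'I_m}) :
  proper_coloring e f = twisted_coloring (fun _ _ => 1%g) f.
Proof.
by apply: eq_forallb => x; apply: eq_forallb => y; rewrite perm1 eq_sym.
Qed.

Hypothesis e_sym : symmetric e.
Hypothesis e_irr : irreflexive e.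
Variables u v : T.
Hypothesis euv : e u v.

Lemma twisted_off_edge (sigma : T -> T -> {perm 'I_m}) (f : {ffun T -> 'I_m}) :
  (forall x y, (x, y) != (u, v) -> (x, y) != (v, u) -> sigma x y = 1%g) ->
  sigma v u = (sigma u v)^-1%g ->
  twisted_coloring sigma f = off_edge_proper e u v f && (f v != sigma u v (f u)).
Proof.
move=> sigma1 sigma_vu; apply/forallP/andP => [tw|[ok fuv] x].
  split; last by move/forallP: (tw u) => /(_ v); rewrite euv.
  apply/forall_inP => p; rewrite inE => /and4P[ep _ puv pvu].
  have sigma_p : sigma p.1 p.2 = 1%g by apply: sigma1; rewrite -surjective_pairing.
  by move/forallP: (tw p.1) => /(_ p.2); rewrite ep sigma_p perm1 eq_sym.
apply/forallP => y; apply/implyP => exy.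
case: (eqVneq (x, y) (u, v)) => [[-> ->] //|xyuv].
case: (eqVneq (x, y) (v, u)) => [[-> ->]|xyvu].
  by rewrite sigma_vu -(can2_eq (permK _) (permKV _)) eq_sym.
have := forall_inP ok _ (orient_Erest e_sym e_irr exy xyuv xyvu).
by rewrite sigma1 // perm1 /orient; case: ifP => _ //=; rewrite eq_sym.
Qed.

Lemma card_twisted (sigma : T -> T -> {perm 'I_m}) :
  (forall x y, (x, y) != (u, v) -> (x, y) != (v, u) -> sigma x y = 1%g) ->
  sigma v u = (sigma u v)^-1%g ->
  #|[set f | twisted_coloring sigma f]| =
  #|[set f : {ffun T -> 'I_m} | off_edge_proper e u v f && (f v != sigma u v (f u))]|.
Proof. by move=> sigma1 sigma_vu; apply: eq_card => f; rewrite !inE twisted_off_edge. Qed.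

Lemma chrom_poly_off_edge :
  chrom_poly e m = #|[set f : {ffun T -> 'I_m} | off_edge_proper e u v f && (f v != f u)]|.
Proof.
transitivity #|[set f | twisted_coloring (fun _ _ => 1%g) f]|.
  by apply: eq_card => f; rewrite !inE proper_twisted.
by rewrite card_twisted ?invg1 //; apply: eq_card => f; rewrite !inE perm1.
Qed.

End Twisted.

Section PermutationCover.
Variable T : finType.
Variable e : rel T.
Hypothesis e_sym : symmetric e.
Hypothesis e_irr : irreflexive e.
Variable m : nat.
Variable sigma : T -> T -> {perm 'I_m}.
Hypothesis sigmaV : forall x y, sigma y x = (sigma x y)^-1%g.

(* The permutation cover of G given by sigma: vertex (x, a) stands for colour a
   at x; the lists L(x) are cliques, and (x, a) ~ (y, sigma x y a) along xy. *)
Definition cover_adj (p q : T * 'I_m) : bool :=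
  ((p.1 == q.1) && (p.2 != q.2)) || (e p.1 q.1 && (q.2 == sigma p.1 q.1 p.2)).

(* sigma y x = (sigma x y)^-1 makes the cover relation symmetric. *)
Lemma cover_adj_sym : symmetric cover_adj.
Proof.
move=> p q; rewrite /cover_adj eq_sym (eq_sym p.2) e_sym sigmaV.
by rewrite -(can2_eq (permK _) (permKV _)) (eq_sym (sigma _ _ _)).
Qed.

(* Cover vertices are numbered by 'I_(#|T| * m), as DP_color_fn requires. *)
Lemma card_cover_vertices : #|{: T * 'I_m}| = #|T| * m.
Proof. by rewrite card_prod card_ord. Qed.

Definition cover_label (i : 'I_(#|T| * m)) : T * 'I_m :=
  enum_val (cast_ord (esym card_cover_vertices) i).

Definition cover_index (p : T * 'I_m) : 'I_(#|T| * m) :=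
  cast_ord card_cover_vertices (enum_rank p).

Lemma cover_labelK : cancel cover_label cover_index.
Proof. by move=> i; rewrite /cover_label /cover_index enum_valK cast_ordKV. Qed.

Lemma cover_indexK : cancel cover_index cover_label.
Proof. by move=> p; rewrite /cover_label /cover_index cast_ordK enum_rankK. Qed.

Lemma cover_label_inj : injective cover_label.
Proof. exact: can_inj cover_labelK. Qed.

Lemma cover_label_ext i j : (cover_label i).1 = (cover_label j).1 ->
  (cover_label i).2 = (cover_label j).2 -> i = j.
Proof.
move=> e1 e2; apply: cover_label_inj.
by rewrite [LHS]surjective_pairing e1 e2 -surjective_pairing.
Qed.

Definition cover_rel (i j : 'I_(#|T| * m)) : bool := cover_adj (cover_label i) (cover_label j).

Definition cover_list (x : T) : {set 'I_(#|T| * m)} := [set i | (cover_label i).1 == x].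

Lemma cover_list_card x : #|cover_list x| = m.
Proof.
have -> : cover_list x = [set cover_index (x, a) | a : 'I_m].
  apply/setP => i; rewrite inE; apply/eqP/imsetP => [<-|[a _ ->]]; last by rewrite cover_indexK.
  by exists (cover_label i).2; rewrite // -surjective_pairing cover_labelK.
by rewrite card_imset ?card_ord // => a b /(can_inj cover_indexK) [].
Qed.

Lemma cover_matching x y i : e x y -> i \in cover_list x ->
  #|[set j in cover_list y | cover_rel i j]| <= 1.
Proof.
move=> exy; rewrite inE => /eqP ix; apply/card_le1_eqP => j k.
have xy : (x == y) = false by apply/negbTE; apply: contraTneq exy => ->; rewrite e_irr.
rewrite !inE /cover_rel /cover_adj ix => /andP[/eqP jy +] /andP[/eqP ky +].
rewrite jy ky xy /= => /andP[_ /eqP jc] /andP[_ /eqP kc].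
by apply: cover_label_ext; rewrite ?jy ?ky ?jc ?kc.
Qed.

Lemma cover_is_mfold : is_mfold_cover e m cover_rel cover_list.
Proof.
apply/andP; split; last by apply/forallP => x; rewrite cover_list_card.
apply/and5P; split.
- by apply/forallP => i; rewrite /cover_rel /cover_adj !eqxx e_irr.
- by apply/forallP => i; apply/forallP => j; rewrite /cover_rel cover_adj_sym.
- apply/forallP => i; rewrite (_ : [set x | _] = [set (cover_label i).1]) ?cards1 //.
  by apply/setP => x; rewrite !inE eq_sym.
- apply/forallP => x; apply/forallP => i; apply/forallP => j; apply/implyP.
  rewrite !inE => /and3P[/eqP ix /eqP jx ij]; rewrite /cover_rel /cover_adj ix jx eqxx /=.
  apply/orP; left; apply: contra ij => /eqP eq2; apply/eqP/cover_label_ext => //.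
  by rewrite ix jx.
apply/andP; split.
  apply/forallP => x; apply/forallP => y; apply/forallP => i; apply/forallP => j.
  apply/implyP; rewrite !inE => /and3P[/eqP ix /eqP jy].
  by rewrite /cover_rel /cover_adj ix jy => /orP[/andP[-> _]|/andP[-> _]]; rewrite ?orbT.
apply/forallP => x; apply/forallP => y; apply/implyP => exy; apply/andP; split.
  by apply/forall_inP => i; apply: cover_matching.
apply/forall_inP => j jy.
have -> : [set i in cover_list x | cover_rel i j] = [set i in cover_list x | cover_rel j i].
  by apply/setP => i; rewrite !inE /cover_rel cover_adj_sym.
by rewrite (cover_matching _ jy) // e_sym.
Qed.

Definition cover_graph_set (f : {ffun T -> 'I_m}) : {set 'I_(#|T| * m)} :=
  [set cover_index (x, f x) | x : T].

Lemma cover_coloring_twisted (I : {set 'I_(#|T| * m)}) :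
  [forall i in I, forall j in I, ~~ cover_rel i j] -> #|I| = #|T| ->
  exists2 f, twisted_coloring e sigma f & I = cover_graph_set f.
Proof.
move=> /forall_inP indep cardI.
have same_list i j : i \in I -> j \in I -> (cover_label i).1 = (cover_label j).1 -> i = j.
  move=> iI jI ij; apply/eqP; apply: contraT => nij.
  move: (indep i iI) => /forall_inP /(_ j jI); rewrite /cover_rel /cover_adj ij eqxx /=.
  rewrite e_irr /= orbF negbK => /eqP eq2.
  by rewrite (cover_label_ext ij eq2) eqxx in nij.
have onto x : exists a, cover_index (x, a) \in I.
  have : [set (cover_label i).1 | i in I] = [set: T].
    by apply/eqP; rewrite eqEcard subsetT cardsT card_in_imset ?cardI ?leqnn.
  move/setP => /(_ x); rewrite inE => /imsetP [i iI ->].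
  by exists (cover_label i).2; rewrite -surjective_pairing cover_labelK.
have [col colI] := fin_all_exists onto; pose f := [ffun x => col x].
have fI x : cover_index (x, f x) \in I by rewrite ffunE.
have graph_sub : cover_graph_set f \subset I by apply/subsetP => _ /imsetP[x _ ->].
exists f.
  apply/forallP => x; apply/forallP => y; apply/implyP => exy.
  move: (indep _ (fI x)) => /forall_inP /(_ _ (fI y)).
  by rewrite /cover_rel /cover_adj !cover_indexK /= exy negb_or => /andP[_].
apply/eqP; rewrite eq_sym eqEcard graph_sub cardI card_imset ?leqnn //.
by move=> x y /(can_inj cover_indexK) [].
Qed.

Lemma DP_count_cover : DP_count T cover_rel <= #|[set f | twisted_coloring e sigma f]|.
Proof.
apply: (leq_trans _ (leq_imset_card cover_graph_set _)).
apply: subset_leq_card; apply/subsetP => I; rewrite inE => /andP[indep /eqP cardI].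
have [f tw ->] := cover_coloring_twisted indep cardI.
by apply/imsetP; exists f; rewrite ?inE.
Qed.

End PermutationCover.

Lemma DP_color_fn_le (T : finType) (e : rel T) (m : nat)
    (h : rel 'I_(#|T| * m)) (L : T -> {set 'I_(#|T| * m)}) :
  is_mfold_cover e m h L -> DP_color_fn e m <= DP_count T h.
Proof.
move=> cover; pose C : cover_data T m := ([ffun p => h p.1 p.2], [ffun x => L x]).
have C1 : (fun i j => C.1 (i, j)) = h.
  apply: functional_extensionality => i; apply: functional_extensionality => j.
  by rewrite ffunE.
have C2 : (fun x => C.2 x) = L by apply: functional_extensionality => x; rewrite ffunE.
rewrite -C1 /DP_color_fn -minEnat -leEnat.
by apply: (Order.TotalTheory.bigmin_le_cond _ (fun C : cover_data T m => _)); rewrite /= C1 C2.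
Qed.

Definition edge_twist (T : finType) (u v : T) (m : nat) (c0 c1 : 'I_m) (x y : T) :
    {perm 'I_m} :=
  if ((x == u) && (y == v)) || ((x == v) && (y == u)) then tperm c0 c1 else 1%g.

Lemma edge_twist_off (T : finType) (u v : T) (m : nat) (c0 c1 : 'I_m) x y :
  (x, y) != (u, v) -> (x, y) != (v, u) -> edge_twist u v c0 c1 x y = 1%g.
Proof. by rewrite /edge_twist -!xpair_eqE => /negbTE-> /negbTE->. Qed.

Lemma edge_twistV (T : finType) (u v : T) (m : nat) (c0 c1 : 'I_m) x y :
  edge_twist u v c0 c1 y x = (edge_twist u v c0 c1 x y)^-1%g.
Proof.
rewrite /edge_twist orbC (andbC (y == u)) (andbC (y == v)).
by case: ifP; rewrite ?tpermV ?invg1.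
Qed.

Theorem mainTheorem1 (T : finType) (e : rel T)
  (e_sym : symmetric e) (e_irr : irreflexive e)
  (e_conn : forall x y : T, connect e x y)
  (g : nat) (hg : is_girth e g) (g_even : ~~ odd g) :
  exists N : nat, forall m : nat, N <= m -> DP_color_fn e m < chrom_poly e m.
Proof.
have [[[|u p0] [cyc size_cyc]] _] := hg; first by case/and3P: cyc.
set v := last u p0; have euv : e u v := closing_edge e_sym cyc erefl.
exists (2 ^ (#|T| * #|T|) * 2).+1 => m hm.
have m1 : 1 < m by apply: leq_trans hm; rewrite ltnS muln_gt0 expn_gt0.
pose c0 : 'I_m := Ordinal (ltnW m1); pose c1 : 'I_m := Ordinal m1.
have c01 : c0 != c1 by [].
pose sigma := edge_twist u v c0 c1; have sigmaV := edge_twistV u v c0 c1.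
apply: leq_ltn_trans (DP_color_fn_le (cover_is_mfold e_sym e_irr sigmaV)) _.
apply: leq_ltn_trans (DP_count_cover e_irr sigma) _.
rewrite (card_twisted e_sym e_irr euv (@edge_twist_off _ u v _ c0 c1)) //.
rewrite (chrom_poly_off_edge m e_sym e_irr euv) /sigma /edge_twist !eqxx.
exact: (difference_pos e_sym e_irr hg g_even cyc size_cyc erefl c01).
Qed.
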